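(* Every simple Yetter-Drinfeld module $V$ over $H=B(n,w,\gamma)$ is finite-dimensional.
   Context: $\Bbbk$ is an algebraically closed field of characteristic $0$; $n,w$ are positive integers and $\gamma\in\Bbbk$ is a primitive $n$-th root of unity. $H=B(n,w,\gamma)$ is the Hopf algebra generated by $x^{\pm1},g,y$ with relations $xx^{-1}=x^{-1}x=1$, $xg=gx$, $xy=yx$, $yg=\gamma gy$, $y^n=1-x^w=1-g^n$, with $\Delta(x)=x\otimes x$, $\Delta(g)=g\otimes g$, $\Delta(y)=y\otimes g+1\otimes y$, $\varepsilon(x)=\varepsilon(g)=1$, $\varepsilon(y)=0$, $S(x)=x^{-1}$, $S(g)=g^{-1}$, $S(y)=-yg^{-1}$. A (left-left) Yetter-Drinfeld module over $H$ is a left $H$-module and left $H$-comodule $(V,\cdot,\delta)$, $\delta(v)=v_{(-1)}\otimes v_{(0)}$, such that $\delta(h\cdot v)=h_{(1)}v_{(-1)}S(h_{(3)})\otimes h_{(2)}\cdot v_{(0)}$ for all $h\in H$, $v\in V$; simple means no nonzero proper Yetter-Drinfeld submodules. *)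

From HB Require Import structures.
From mathcomp Require Import all_boot all_order all_algebra.
Set Implicit Arguments. Unset Strict Implicit. Unset Printing Implicit Defensive.
Import Order.TTheory GRing.Theory Num.Theory.
Local Open Scope ring_scope.

(* The Hopf algebra H = B(n,w,gamma), realised concretely on its PBW basis   *)
(*     x^i g^j y^k,   i : int,  0 <= j < n,  0 <= k < n.                     *)
(* An element of a vector space with basis T is represented by a formal     *)
(* linear combination  s : seq (K * T)  (unnormalised); its coefficient at   *)
(* a basis vector t is  coef s t.                                            *)

Section FormalSums.
Variable K : fieldType.

Definition coef (T : eqType) (s : seq (K * T)) (t : T) : K :=
  \sum_(p <- s | p.2 == t) p.1.

Definition fmul (T : Type) (mB : T -> T -> seq (K * T)) (s t : seq (K * T)) :
    seq (K * T) :=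
  flatten [seq flatten [seq [seq (p.1 * q.1 * r.1, r.2) | r <- mB p.2 q.2]
                       | q <- t] | p <- s].

Definition fscale (T : Type) (a : K) (s : seq (K * T)) : seq (K * T) :=
  [seq (a * p.1, p.2) | p <- s].

Definition fexp (T : Type) (mB : T -> T -> seq (K * T)) (one s : seq (K * T))
    (m : nat) : seq (K * T) :=
  iter m (fmul mB s) one.

Definition ftens (T U : Type) (s : seq (K * T)) (t : seq (K * U)) :
    seq (K * (T * U)) :=
  flatten [seq [seq (p.1 * q.1, (p.2, q.2)) | q <- t] | p <- s].

End FormalSums.

Section HopfB.
Variables (K : fieldType) (n : nat) (hn : (0 < n)%N) (w : nat) (gamma : K).

(* basis index (i, j, k) stands for x^i g^j y^k *)
Definition Bbasis : Type := (int * 'I_n * 'I_n)%type.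

Definition ordm (m : nat) : 'I_n := Ordinal (ltn_pmod m hn).

(* normal form of the word x^a g^b y^c (any a : int, b c : nat), using
   g^n = x^w and y^n = 1 - x^w (x central, y commutes with x):
   x^a g^b y^c = \sum_(t <= q) (-1)^t C(q,t) x^(a + w (b/n) + w t) g^(b%n) y^(c%n),
   where q = c / n. *)
Definition mono (a : int) (b c : nat) : seq (K * Bbasis) :=
  [seq ((-1) ^+ t * ('C(c %/ n, t))%:R,
        (a + (w * (b %/ n))%:Z + (w * t)%:Z, ordm b, ordm c))
  | t <- iota 0 (c %/ n).+1].

(* product of basis vectors, using y g = gamma g y:
   (x^i g^j y^k)(x^i' g^j' y^k') = gamma^(k j') x^(i+i') g^(j+j') y^(k+k') *)
Definition mulB (b b' : Bbasis) : seq (K * Bbasis) :=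
  let: (i, j, k) := b in let: (i', j', k') := b' in
  fscale (gamma ^+ (k * j')) (mono (i + i') (j + j') (k + k')).

Definition mulH := fmul mulB.
Definition bas (b : Bbasis) : seq (K * Bbasis) := [:: (1, b)].
Definition oneH := mono 0 0 0.
Definition xpowH (i : int) := mono i 0 0.
Definition gH := mono 0 1 0.
Definition yH := mono 0 0 1.
Definition expH (s : seq (K * Bbasis)) (m : nat) := fexp mulB oneH s m.

Definition mulBB (p q : Bbasis * Bbasis) : seq (K * (Bbasis * Bbasis)) :=
  ftens (mulB p.1 q.1) (mulB p.2 q.2).
Definition oneHH := ftens oneH oneH.
Definition expHH (s : seq (K * (Bbasis * Bbasis))) (m : nat) :=
  fexp mulBB oneHH s m.

Definition DeltaX (i : int) := ftens (xpowH i) (xpowH i).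
Definition DeltaG := ftens gH gH.
Definition DeltaY := ftens yH gH ++ ftens oneH yH.

Definition DeltaB (b : Bbasis) : seq (K * (Bbasis * Bbasis)) :=
  let: (i, j, k) := b in
  fmul mulBB (fmul mulBB (DeltaX i) (expHH DeltaG j)) (expHH DeltaY k).

(* (Delta (x) id) Delta, i.e. h_(1) (x) h_(2) (x) h_(3) *)
Definition Delta2B (b : Bbasis) : seq (K * (Bbasis * Bbasis * Bbasis)) :=
  flatten [seq [seq (p.1 * q.1, (q.2.1, q.2.2, p.2.2)) | q <- DeltaB p.2.1]
          | p <- DeltaB b].

Definition epsB (b : Bbasis) : K := if (val b.2 == 0)%N then 1 else 0.

(* antipode: S(x) = x^-1, S(g) = g^-1 = x^-w g^(n-1), S(y) = - y g^-1;
   S(x^i g^j y^k) = S(y)^k S(g)^j S(x)^i *)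
Definition SgH := mono (- (w%:Z)) n.-1 0.
Definition SyH := fscale (-1) (mulH yH SgH).
Definition SB (b : Bbasis) : seq (K * Bbasis) :=
  let: (i, j, k) := b in
  mulH (mulH (expH SyH k) (expH SgH j)) (xpowH (- i)).

(* Left-left Yetter-Drinfeld modules over H.                                 *)
(* The action is given by the (linear) action  rho b  of each basis vector;  *)
(* the coaction by its components: delta(v) = \sum_b b (x) delta b v, where  *)
(* for each v only finitely many  delta b v  are nonzero.                    *)

Definition fin_supp (V : lmodType K) (d : Bbasis -> V -> V) (v : V)
    (s : seq Bbasis) : Prop :=
  uniq s /\ forall b, b \notin s -> d b v = 0.

Record YDmod (V : lmodType K) := {
  rho : Bbasis -> V -> V;
  delta : Bbasis -> V -> V;
  rho_lin : forall b, linear (rho b);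
  delta_lin : forall b, linear (delta b);
  rho_one : forall v, rho (0, ordm 0, ordm 0) v = v;
  rho_mul : forall b b' v,
    rho b (rho b' v) = \sum_(p <- mulB b b') p.1 *: rho p.2 v;
  delta_fin : forall v, exists s, fin_supp delta v s;
  delta_coass : forall v s, fin_supp delta v s -> forall c d,
    delta d (delta c v) = \sum_(b <- s) coef (DeltaB b) (c, d) *: delta b v;
  delta_counit : forall v s, fin_supp delta v s ->
    \sum_(b <- s) epsB b *: delta b v = v;
  (* Yetter-Drinfeld compatibility, for h = a a basis vector:
     delta(a.v) = a_(1) v_(-1) S(a_(3)) (x) a_(2).v_(0) *)
  yd_compat : forall a v s, fin_supp delta v s -> forall c,
    delta c (rho a v) =
    \sum_(t <- Delta2B a) \sum_(b <- s)
       (t.1 * coef (mulH (mulH (bas t.2.1.1) (bas b)) (SB t.2.2)) c)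
         *: rho t.2.1.2 (delta b v)
}.

Definition YDsubmodule (V : lmodType K) (M : YDmod V) (W : V -> Prop) : Prop :=
  [/\ W 0, (forall u v, W u -> W v -> W (u + v)),
      (forall (a : K) u, W u -> W (a *: u)),
      (forall b u, W u -> W (rho M b u)) &
      (forall b u, W u -> W (delta M b u))].

Definition YDsimple (V : lmodType K) (M : YDmod V) : Prop :=
  forall W : V -> Prop, YDsubmodule M W ->
    ~ ((exists u, W u /\ u <> 0) /\ (exists v, ~ W v)).

End HopfB.

Definition finite_dim (K : fieldType) (V : lmodType K) : Prop :=
  exists s : seq V, forall v : V,
    exists c : 'I_(size s) -> K, v = \sum_(i < size s) c i *: s`_i.

From HB Require Import structures.
From mathcomp Require Import all_boot all_order all_algebra.
From Stdlib Require Import Classical.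
Import GRing.Theory.
Local Open Scope ring_scope.

Set Implicit Arguments. Unset Strict Implicit. Unset Printing Implicit Defensive.

(* The grouplike x is central in H, so every polynomial in x acts on V by a
   Yetter-Drinfeld endomorphism, whose kernel and image are 0 or V when V is
   simple. For v <> 0, the Yetter-Drinfeld condition shows that V is spanned by
   the x^i g^j y^k . v_(0), so V is generated over K[x, x^-1] by finitely many
   vectors. If x acts by a scalar, these vectors span V. Otherwise x has no
   eigenvector and x - 1 is onto, and the determinant trick of Nakayama's lemma
   gives a nonzero polynomial p with p(x) x^D u = 0 for each u; splitting p over
   the algebraically closed field K forces u = 0. *)

Section PolyAction.
Variables (K : fieldType) (V : lmodType K) (T : {linear V -> V}).

Lemma iter_is_linear i : linear (iter i T).
Proof. by elim: i => [|i IH] a u v //=; rewrite IH linearP. Qed.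

HB.instance Definition _ i :=
  GRing.isLinear.Build K V V *:%R (iter i T) (iter_is_linear i).

Lemma iter_comm (S : V -> V) : (forall u, S (T u) = T (S u)) ->
  forall i u, S (iter i T u) = iter i T (S u).
Proof. by move=> ST; elim=> [|i IH] u //=; rewrite ST IH. Qed.

Definition pact (p : {poly K}) (u : V) : V :=
  \sum_(i < size p) p`_i *: iter i T u.

Lemma pact_is_linear p : linear (pact p).
Proof.
move=> a u v; rewrite /pact scaler_sumr -big_split /=.
by apply: eq_bigr => i _; rewrite linearP scalerDr !scalerA mulrC.
Qed.

HB.instance Definition _ p :=
  GRing.isLinear.Build K V V *:%R (pact p) (pact_is_linear p).

Lemma pact_widen N (p : {poly K}) u : (size p <= N)%N ->
  pact p u = \sum_(i < N) p`_i *: iter i T u.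
Proof.
move=> pN; rewrite /pact (big_ord_widen N (fun i => p`_i *: iter i T u)) //.
rewrite big_mkcond; apply: eq_bigr => i _; case: ltnP => // /(nth_default 0) ->.
by rewrite scale0r.
Qed.

Lemma pact0 u : pact 0 u = 0.
Proof. by rewrite /pact size_poly0 big_ord0. Qed.

Lemma pactC c u : pact c%:P u = c *: u.
Proof. by rewrite (@pact_widen 1) ?size_polyC ?leq_b1 // big_ord1 coefC. Qed.

Lemma pactD p q u : pact (p + q) u = pact p u + pact q u.
Proof.
pose N := maxn (size p) (size q).
rewrite (@pact_widen N) ?(leq_trans (size_polyD _ _)) //.
rewrite (@pact_widen N p) ?leq_maxl // (@pact_widen N q) ?leq_maxr //.
by rewrite -big_split; apply: eq_bigr => i _; rewrite coefD scalerDl.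
Qed.

Lemma pactZ c p u : pact (c *: p) u = c *: pact p u.
Proof.
rewrite (@pact_widen (size p)) ?size_scale_leq // scaler_sumr.
by apply: eq_bigr => i _; rewrite coefZ scalerA.
Qed.

Lemma pactN p u : pact (- p) u = - pact p u.
Proof. by rewrite -[- p]scaleN1r pactZ scaleN1r. Qed.

Lemma pact_sum (I : Type) (r : seq I) (P : pred I) (F : I -> {poly K}) u :
  pact (\sum_(i <- r | P i) F i) u = \sum_(i <- r | P i) pact (F i) u.
Proof. exact: (big_morph (pact^~ u) (fun p q => pactD p q u) (pact0 u)). Qed.

Lemma pact_comm (S : {linear V -> V}) : (forall u, S (T u) = T (S u)) ->
  forall p u, S (pact p u) = pact p (S u).
Proof.
move=> ST p u; rewrite linear_sum; apply: eq_bigr => i _.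
by rewrite linearZ iter_comm.
Qed.

Lemma pactMX p u : pact (p * 'X) u = pact p (T u).
Proof.
have sz : (size (p * 'X)%R <= (size p).+1)%N.
  by have [->|nz] := eqVneq p 0; rewrite ?mul0r ?size_poly0 // size_mulX.
rewrite (pact_widen _ sz) big_ord_recl coefMX scale0r add0r.
by apply: eq_bigr => i _; rewrite coefMX /= -iterSr.
Qed.

Lemma pactM p q u : pact (p * q) u = pact p (pact q u).
Proof.
elim/poly_ind: p u => [|p c IH] u; first by rewrite mul0r !pact0.
rewrite mulrDl mulrAC mul_polyC !pactD !pactMX IH pactZ pactC.
by rewrite (pact_comm (S := T)).
Qed.

Lemma pactXn d u : pact 'X^d u = iter d T u.
Proof.
elim: d u => [|d IH] u; first by rewrite expr0 -polyC1 pactC scale1r.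
by rewrite exprSr pactMX IH -iterSr.
Qed.

Lemma pactXsubC z u : pact ('X - z%:P) u = T u - z *: u.
Proof. by rewrite pactD -polyCN pactC -['X]expr1 pactXn scaleNr. Qed.

Lemma pact_scalar z : (forall u, T u = z *: u) ->
  forall p u, pact p u = p.[z] *: u.
Proof.
move=> Tz p u; have iterTz i : iter i T u = z ^+ i *: u.
  by elim: i => [|i IH]; rewrite ?expr0 ?scale1r //= IH Tz scalerA exprS.
rewrite /pact horner_coef scaler_suml; apply: eq_bigr => i _.
by rewrite iterTz scalerA.
Qed.

(* Cramer's rule over the commutative ring K[T]: adj Q * Q = det Q. *)
Lemma pact_det_eq0 m (Q : 'M[{poly K}]_m) (e : 'I_m -> V) :
  (forall j, \sum_k pact (Q j k) (e k) = 0) -> forall j, pact (\det Q) (e j) = 0.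
Proof.
move=> Qe0 j.
have -> : pact (\det Q) (e j) = \sum_k pact ((\det Q)%:M j k) (e k).
  rewrite (bigD1 j) //= mxE eqxx mulr1n big1 ?addr0 // => k /negbTE kj.
  by rewrite mxE eq_sym kj mulr0n pact0.
rewrite -mul_adj_mx; under eq_bigr => k _ do rewrite mxE pact_sum.
rewrite exchange_big big1 //= => l _; under eq_bigr => k _ do rewrite pactM.
by rewrite -linear_sum Qe0 linear0.
Qed.

Lemma pact_prod_XsubC_eq0 (r : seq K) u :
  (forall z y, T y = z *: y -> y = 0) ->
  pact (\prod_(z <- r) ('X - z%:P)) u = 0 -> u = 0.
Proof.
move=> noeigen; elim: r u => [|z r IH] u; first by rewrite big_nil -polyC1 pactC scale1r.
rewrite big_cons mulrC pactM => /IH; rewrite pactXsubC => /eqP.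
by rewrite subr_eq0 => /eqP /noeigen.
Qed.

Section ShiftedSpan.
Variable gens : seq V.

(* As T will be invertible, this says that u lies in the K[T, T^-1]-submodule
   generated by gens. *)
Definition shifted_span (u : V) : Prop :=
  exists (D : nat) (p : 'I_(size gens) -> {poly K}),
    iter D T u = \sum_k pact (p k) gens`_k.

Lemma shifted_span0 : shifted_span 0.
Proof. by exists 0%N, (fun=> 0); rewrite linear0 big1 // => k _; rewrite pact0. Qed.

Lemma shifted_spanD u v :
  shifted_span u -> shifted_span v -> shifted_span (u + v).
Proof.
move=> [D [p Du]] [E [q Ev]]; exists (D + E)%N, (fun k => 'X^E * p k + 'X^D * q k).
rewrite linearD /= {1}addnC !iterD Du Ev !linear_sum -big_split /=.
by apply: eq_bigr => k _; rewrite pactD !pactM !pactXn.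
Qed.

Lemma shifted_spanZ a u : shifted_span u -> shifted_span (a *: u).
Proof.
move=> [D [p Du]]; exists D, (fun k => a *: p k).
by rewrite linearZ /= Du scaler_sumr; apply: eq_bigr => k _; rewrite pactZ.
Qed.

Lemma shifted_span_iter_mem i g : g \in gens -> shifted_span (iter i T g).
Proof.
move=> g_in; have k_lt : (index g gens < size gens)%N by rewrite index_mem.
pose k := Ordinal k_lt; exists 0%N, (fun l => if l == k then 'X^i else 0).
rewrite (bigD1 k) //= eqxx big1 ?addr0 => [|l /negPf ->]; last exact: pact0.
by rewrite pactXn nth_index.
Qed.

Lemma shifted_span_iterK D u : shifted_span (iter D T u) -> shifted_span u.
Proof. by move=> [E [p EDu]]; exists (E + D)%N, p; rewrite iterD. Qed.

Lemma scalar_shifted_span_finite_dim z : z != 0 -> (forall u, T u = z *: u) ->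
  (forall u, shifted_span u) -> finite_dim V.
Proof.
move=> z0 Tz span; exists gens => u; have [D [p Du]] := span u.
exists (fun k => z ^- D * (p k).[z]).
have zD0 : z ^+ D != 0 by rewrite expf_neq0.
rewrite -pactXn (pact_scalar Tz) hornerXn in Du.
apply: (scalerI zD0); rewrite Du scaler_sumr; apply: eq_bigr => k _.
by rewrite (pact_scalar Tz) !scalerA mulrA mulfV ?mul1r.
Qed.

Lemma shifted_span_annihilated P :
  (forall k : 'I_(size gens), pact P gens`_k = 0) -> forall u, shifted_span u -> exists D, pact (P * 'X^D) u = 0.
Proof.
move=> Pgens u [D [p Du]]; exists D.
rewrite pactM pactXn Du linear_sum big1 // => k _.
by rewrite /= -pactM mulrC pactM Pgens linear0.
Qed.

(* The determinant trick of Nakayama's lemma: up to a power of T, each generator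
   is (T - 1) times a K[T]-combination of the generators. *)
Lemma det_annihilator_gens :
  (forall k : 'I_(size gens), exists u, gens`_k = T u - u) ->
  (forall u, shifted_span u) ->
  exists2 P : {poly K}, P.[1] = 1 & forall k : 'I_(size gens), pact P gens`_k = 0.
Proof.
move=> gens_img span.
have step (k : 'I_(size gens)) : exists D (p : 'I_(size gens) -> {poly K}),
    iter D T gens`_k = \sum_l pact (('X - 1%:P) * p l) gens`_l.
  have [u ->] := gens_img k; have [D [p Du]] := span u; exists D, p.
  under eq_bigr => l _ do rewrite pactM.
  by rewrite -linear_sum -Du /= pactXsubC scale1r linearB /= -iterSr.
have [D hD] := fin_all_exists step; have [p hp] := fin_all_exists hD.
pose Q := \matrix_(j, k) ((j == k)%:R * 'X^(D j) - ('X - 1%:P) * p j k).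
exists (\det Q).
  rewrite -horner_evalE -det_map_mx -[RHS](det1 _ (size gens)); congr (\det _).
  apply/matrixP => j k; rewrite !mxE.
  change (((j == k)%:R * 'X^(D j) - ('X - 1%:P) * p j k).[1] = (j == k)%:R :> K).
  by case: (j == k); rewrite !hornerE subrr mul0r ?expr1n ?subr0 ?oppr0.
apply: pact_det_eq0 => j; under eq_bigr => k _ do rewrite mxE pactD pactN.
rewrite big_split /= sumrN -hp (bigD1 j) //= eqxx mul1r big1 ?addr0.
  by rewrite pactXn subrr.
by move=> k; rewrite eq_sym => /negbTE ->; rewrite mul0r pact0.
Qed.

End ShiftedSpan.

End PolyAction.

Lemma shifted_span_eq0 (K : closedFieldType) (V : lmodType K)
    (T : {linear V -> V}) (gens : seq V) :
  (forall z y, T y = z *: y -> y = 0) -> (forall u, exists u', u = T u' - u') ->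
  (forall u, shifted_span T gens u) -> forall u : V, u = 0.
Proof.
move=> noeigen onto span u.
have [P P1 Pgens] := det_annihilator_gens (fun k => onto gens`_k) span.
have [D PDu] := shifted_span_annihilated Pgens (span u).
have P0 : P != 0 by apply/eqP => P0; move/eqP: P1; rewrite P0 horner0 eq_sym oner_eq0.
have PD0 : P * 'X^D != 0 by rewrite mulf_neq0 // monic_neq0 ?monicXn.
have [r PDr] := closed_field_poly_normal (P * 'X^D).
move: PDu; rewrite PDr pactZ => /eqP; rewrite scaler_eq0 lead_coef_eq0 (negbTE PD0).
by move/eqP; apply: pact_prod_XsubC_eq0.
Qed.

Section BasisComputations.
Variables (K : fieldType) (n : nat) (hn : (0 < n)%N) (w : nat) (gamma : K).
Local Notation o := (ordm hn 0).
#[local] Arguments fscale : simpl never.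
#[local] Arguments DeltaB : simpl never.

Lemma ordm_ord (j : 'I_n) : ordm hn j = j.
Proof. by apply: val_inj; rewrite /= modn_small. Qed.

Lemma val_ordm0 : o = 0%N :> nat.
Proof. exact: mod0n. Qed.

Lemma mono_small a b c : (b < n)%N -> (c < n)%N ->
  mono K hn w a b c = [:: (1, (a, ordm hn b, ordm hn c))].
Proof. by move=> bn cn; rewrite /mono !divn_small //= expr0 bin0 mul1r !muln0 !addr0. Qed.

Lemma mulB_xl i (b : Bbasis n) :
  mulB hn w gamma (i, o, o) b = [:: (1, (i + b.1.1, b.1.2, b.2))].
Proof.
case: b => [[i' j'] k']; rewrite /mulB /= mod0n mul0n expr0 !add0n mono_small //.
by rewrite /fscale /= mulr1 !ordm_ord.
Qed.

Lemma mulB_xr i (b : Bbasis n) :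
  mulB hn w gamma b (i, o, o) = [:: (1, (b.1.1 + i, b.1.2, b.2))].
Proof.
case: b => [[i' j'] k']; rewrite /mulB /= mod0n muln0 expr0 !addn0 mono_small //.
by rewrite /fscale /= mulr1 !ordm_ord.
Qed.

Lemma fmul_single (T : Type) (mB : T -> T -> seq (K * T)) a b x y :
  fmul mB [:: (a, x)] [:: (b, y)] = [seq (a * b * r.1, r.2) | r <- mB x y].
Proof. by rewrite /fmul /= !cats0. Qed.

Lemma ftens_single (T U : Type) a b (x : T) (y : U) :
  ftens [:: (a, x)] [:: (b, y)] = [:: (a * b : K, (x, y))].
Proof. by []. Qed.

Lemma mulBB_pair (x1 x2 y1 y2 : Bbasis n) :
  mulBB hn w gamma (x1, x2) (y1, y2) =
  ftens (mulB hn w gamma x1 y1) (mulB hn w gamma x2 y2).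
Proof. by []. Qed.

Lemma DeltaB_x i :
  DeltaB hn w gamma (i, o, o) = [:: (1, ((i, o, o), (i, o, o)))].
Proof.
rewrite /DeltaB /expHH /fexp val_ordm0 /oneHH /DeltaX /oneH /xpowH !mono_small //.
have mulBBE := fmul_single (mulBB hn w gamma).
rewrite /= !ftens_single mulBBE mulBB_pair !mulB_xr.
rewrite ftens_single /= mulBBE mulBB_pair !mulB_xr.
by rewrite ftens_single /= !mulr1 !addr0.
Qed.

Lemma Delta2B_x :
  Delta2B hn w gamma (1, o, o) = [:: (1, ((1, o, o), (1, o, o), (1, o, o)))].
Proof. by rewrite /Delta2B DeltaB_x /= DeltaB_x /= mulr1. Qed.

Lemma coef_conj_x (b c : Bbasis n) :
  coef (mulH hn w gamma (mulH hn w gamma (bas K (1, o, o)) (bas K b))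
          (SB hn w gamma (1, o, o))) c = (b == c)%:R.
Proof.
rewrite /SB val_ordm0 /expH /fexp /= /oneH /xpowH !mono_small // /mulH /bas.
have mulBE := fmul_single (mulB hn w gamma).
rewrite mulBE mulB_xl /= mulBE mulB_xr /= mulBE mulB_xr /= mulBE mulB_xr /=.
rewrite /coef unlock /= !mulr1 !addr0 add0r addrC addKr.
by rewrite -!surjective_pairing; case: eqP.
Qed.

End BasisComputations.

Section YetterDrinfeldModule.
Variables (K : fieldType) (n : nat) (hn : (0 < n)%N) (w : nat) (gamma : K).
Variables (V : lmodType K) (M : YDmod hn w gamma V).

HB.instance Definition _ b :=
  GRing.isLinear.Build K V V *:%R (rho M b) (rho_lin M b).
HB.instance Definition _ c :=
  GRing.isLinear.Build K V V *:%R (delta M c) (delta_lin M c).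

Local Notation o := (ordm hn 0).
Local Notation xact := (rho M (1, o, o)).

Lemma rho_xl i b u :
  rho M (i, o, o) (rho M b u) = rho M (i + b.1.1, b.1.2, b.2) u.
Proof. by rewrite rho_mul mulB_xl big_seq1 scale1r. Qed.

Lemma rho_xr b i u :
  rho M b (rho M (i, o, o) u) = rho M (b.1.1 + i, b.1.2, b.2) u.
Proof. by rewrite rho_mul mulB_xr big_seq1 scale1r. Qed.

Lemma xact_rho b u : xact (rho M b u) = rho M b (xact u).
Proof. by rewrite rho_xl rho_xr addrC. Qed.

Lemma xactK u : xact (rho M (-1, o, o) u) = u.
Proof. by rewrite rho_xl addrN rho_one. Qed.

Lemma iter_xact_rho D i j k u :
  iter D xact (rho M (i, j, k) u) = rho M (i + D%:Z, j, k) u.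
Proof.
elim: D => [|D IH]; first by rewrite addr0.
by rewrite iterS IH rho_xl /= intS addrCA.
Qed.

(* x v_(-1) S(x) = v_(-1), as x is grouplike and central. *)
Lemma delta_xact c u : delta M c (xact u) = xact (delta M c u).
Proof.
have [s [s_uniq s_supp]] := delta_fin M u.
rewrite (yd_compat _ (conj s_uniq s_supp)) Delta2B_x big_seq1 /=.
under eq_bigr => b _ do rewrite coef_conj_x mul1r scaler_nat mulrb.
rewrite -big_mkcond /=; have [cs | /negPf cNs] := boolP (c \in s).
  by rewrite -big_filter filter_pred1_uniq // big_seq1.
by rewrite s_supp ?cNs // linear0 big1_seq // => b /andP [/eqP -> ]; rewrite cNs.
Qed.

Definition YDendo (f : V -> V) : Prop :=
  (forall b u, f (rho M b u) = rho M b (f u)) /\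
  (forall c u, f (delta M c u) = delta M c (f u)).

Lemma YDendo_pact p : YDendo (pact xact p).
Proof.
split=> [b|c] u; first by rewrite (pact_comm (S := rho M b)) // => v /=; rewrite xact_rho.
by rewrite (pact_comm (S := delta M c)) // => v /=; rewrite delta_xact.
Qed.

Lemma YDsubmodule_kernel (f : {linear V -> V}) :
  YDendo f -> YDsubmodule M (fun u => f u = 0).
Proof.
move=> [f_rho f_delta]; split=> [|u v fu fv|a u fu|b u fu|c u fu].
- exact: linear0.
- by rewrite linearD fu fv addr0.
- by rewrite linearZZ fu scaler0.
- by rewrite f_rho fu linear0.
- by rewrite f_delta fu linear0.
Qed.

Lemma YDsubmodule_image (f : {linear V -> V}) :
  YDendo f -> YDsubmodule M (fun u => exists u', u = f u').
Proof.
move=> [f_rho f_delta]; split=> [|_ _ [u ->] [v ->]|a _ [u ->]|b _ [u ->]|c _ [u ->]].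
- by exists 0; rewrite linear0.
- by exists (u + v); rewrite linearD.
- by exists (a *: u); rewrite linearZZ.
- by exists (rho M b u); rewrite f_rho.
- by exists (delta M c u); rewrite f_delta.
Qed.

Lemma YDsimple_submodule W : YDsimple M -> YDsubmodule M W ->
  (forall u, W u -> u = 0) \/ (forall u, W u).
Proof.
move=> simple W_sub; have [|/not_all_ex_not [v Wv]] := classic (forall u, W u).
  by right.
left=> u Wu; apply: NNPP => u0.
exact: simple W W_sub (conj (ex_intro _ u (conj Wu u0)) (ex_intro _ v Wv)).
Qed.

Section NonScalar.
Variable z : K.
Hypotheses (simple : YDsimple M) (nonscalar : ~ forall u, xact u = z *: u).

Lemma YDsimple_eigenvector y : xact y = z *: y -> y = 0.
Proof.
have ker_sub := YDsubmodule_kernel (YDendo_pact ('X - z%:P)).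
have [ker0|ker_all] := YDsimple_submodule simple ker_sub.
  move=> xy; apply: ker0; rewrite /= pactXsubC; apply/eqP.
  by rewrite subr_eq0; apply/eqP; exact: xy.
case: nonscalar => u; apply/eqP; rewrite -subr_eq0 -pactXsubC; apply/eqP.
exact: ker_all.
Qed.

Lemma YDsimple_xact_subz_onto u : exists u', u = xact u' - z *: u'.
Proof.
have img_sub := YDsubmodule_image (YDendo_pact ('X - z%:P)).
have [img0|img_all] := YDsimple_submodule simple img_sub; last first.
  by have [u' ->] := img_all u; exists u'; rewrite /= pactXsubC.
case: nonscalar => v; apply/eqP; rewrite -subr_eq0 -pactXsubC; apply/eqP.
exact: img0 _ (ex_intro _ v erefl).
Qed.

End NonScalar.

Section GeneratedSubmodule.
Variable v : V.

Inductive yd_span : V -> Prop :=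
  | yd_span0 : yd_span 0
  | yd_span_gen b c : yd_span (rho M b (delta M c v))
  | yd_spanD u u' : yd_span u -> yd_span u' -> yd_span (u + u')
  | yd_spanZ a u : yd_span u -> yd_span (a *: u).

Lemma yd_span_sum (I : Type) (r : seq I) (F : I -> V) :
  (forall i, yd_span (F i)) -> yd_span (\sum_(i <- r) F i).
Proof.
move=> spanF; elim: r => [|i r IH]; first by rewrite big_nil; exact: yd_span0.
by rewrite big_cons; apply: yd_spanD.
Qed.

Lemma yd_span_rho a u : yd_span u -> yd_span (rho M a u).
Proof.
elim=> [|b c|u1 u2 _ IH1 _ IH2|k u1 _ IH1].
- by rewrite linear0; exact: yd_span0.
- by rewrite rho_mul; apply: yd_span_sum => p; apply/yd_spanZ/yd_span_gen.
- by rewrite linearD; apply: yd_spanD.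
- by rewrite linearZZ; apply: yd_spanZ.
Qed.

Lemma yd_span_delta d u : yd_span u -> yd_span (delta M d u).
Proof.
elim=> [|b c|u1 u2 _ IH1 _ IH2|k u1 _ IH1].
- by rewrite linear0; exact: yd_span0.
- have [s s_supp] := delta_fin M (delta M c v); have [s' s'_supp] := delta_fin M v.
  rewrite (yd_compat _ s_supp); apply: yd_span_sum => t; apply: yd_span_sum => e.
  rewrite (delta_coass s'_supp) linear_sum; apply/yd_spanZ/yd_span_sum => e'.
  by rewrite linearZZ; apply/yd_spanZ/yd_span_gen.
- by rewrite linearD; apply: yd_spanD.
- by rewrite linearZZ; apply: yd_spanZ.
Qed.

Lemma YDsubmodule_span : YDsubmodule M yd_span.
Proof.
split; [exact: yd_span0 | exact: yd_spanD | exact: yd_spanZ |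
        exact: yd_span_rho | exact: yd_span_delta].
Qed.

Lemma yd_span_self : yd_span v.
Proof.
have [s s_supp] := delta_fin M v; rewrite -(delta_counit s_supp).
apply: yd_span_sum => b; apply: yd_spanZ.
by have := yd_span_gen (0, o, o) b; rewrite rho_one.
Qed.

Definition yd_gens (s : seq (Bbasis n)) : seq V :=
  [seq rho M (0, jk.1, jk.2) (delta M b v) | jk <- enum {: 'I_n * 'I_n}, b <- s].

Lemma yd_span_shifted s : fin_supp (delta M) v s ->
  forall u, yd_span u -> shifted_span xact (yd_gens s) u.
Proof.
move=> [_ s_supp] u; elim=> [|[[i j] k] c|u1 u2 _ IH1 _ IH2|a u1 _ IH1].
- exact: shifted_span0.
- have [c_in|c_notin] := boolP (c \in s); last first.
    by rewrite s_supp // linear0; exact: shifted_span0.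
  have gen_in : rho M (0, j, k) (delta M c v) \in yd_gens s.
    by apply/allpairsP; exists ((j, k), c); rewrite mem_enum.
  case: i => a.
  + by have := shifted_span_iter_mem xact a gen_in; rewrite iter_xact_rho add0r.
  + apply: (shifted_span_iterK (D := a.+1)); rewrite iter_xact_rho NegzE addNr.
    exact: (shifted_span_iter_mem xact 0 gen_in).
- exact: shifted_spanD.
- exact: shifted_spanZ.
Qed.

End GeneratedSubmodule.

End YetterDrinfeldModule.

Theorem proposition3p1 (K : closedFieldType) (charK : [pchar K] =i pred0)
    (n : nat) (hn : (0 < n)%N) (w : nat) (hw : (0 < w)%N) (gamma : K)
    (hgamma : n.-primitive_root gamma)
    (V : lmodType K) (M : YDmod hn w gamma V) :
  YDsimple M -> finite_dim V.
Proof.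
move=> simple; have [[v v0]|V0] := classic (exists v : V, v <> 0); last first.
  exists [::] => u; exists (fun=> 0); rewrite big_ord0.
  by apply: NNPP => u0; apply: V0; exists u.
set x := rho M (1, ordm hn 0, ordm hn 0).
have [s s_supp] := delta_fin M v.
have span u : shifted_span x (yd_gens M v s) u.
  apply: (yd_span_shifted s_supp).
  have [span0|//] := YDsimple_submodule simple (YDsubmodule_span M v).
  by case: v0; apply: span0; exact: yd_span_self.
have [[z xz]|nonscalar] := classic (exists z, forall u, x u = z *: u).
  apply: (scalar_shifted_span_finite_dim _ xz span).
  by apply/eqP => z0; apply: v0; rewrite -(xactK M v) -/x xz z0 scale0r.
case: v0; apply: (shifted_span_eq0 _ _ span) => [z y|u].
  by apply: (YDsimple_eigenvector simple) => xz; apply: nonscalar; exists z.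
have x_neq1 : ~ forall u, x u = 1 *: u by move=> x1; apply: nonscalar; exists 1.
by have [u' ->] := YDsimple_xact_subz_onto simple x_neq1 u; exists u'; rewrite scale1r.
Qed.
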